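(* Suppose $\ell'$ is $\beta$-Lipschitz and $|\ell'|\le G$ on $\mathbb{R}$. Let $R\ge1$ and $\beta(R):=2L^2R^{2L-2}(\beta+G)$. Then $\mathcal{R}$ is $\beta(R)$-smooth on $B(R)$: for all $W,V\in B(R)$, $\|\nabla\mathcal{R}(W)-\nabla\mathcal{R}(V)\|\le\beta(R)\|W-V\|$.
   Context: Given $z_1,\dots,z_n\in\mathbb{R}^d$ with $\|z_i\|\le1$. A depth-$L$ linear network is $W=(W_L,\dots,W_1)$ with $W_k\in\mathbb{R}^{d_k\times d_{k-1}}$, $d_0=d$, $d_L=1$, $w_{\mathrm{prod}}:=(W_L\cdots W_1)^\top$, and $\mathcal{R}(W)=\frac1n\sum_{i=1}^n\ell(\langle w_{\mathrm{prod}},z_i\rangle)$. $\|W\|$ denotes the Euclidean norm of all entries of $W$ jointly, and $\|\cdot\|_F$ the Frobenius norm. $B(R):=\{W:\|W_k\|_F\le R\text{ for all }1\le k\le L\}$. *)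

From Stdlib Require Import Reals Lra Lia Arith.
Open Scope R_scope.

Fixpoint rsum (n : nat) (f : nat -> R) : R :=
  match n with O => 0 | S m => rsum m f + f m end.

(* Parameters of a depth-L linear network: W k i j is entry (i,j) of layer W_k,
   meaningful for 1 <= k <= L, i < dims k, j < dims (k-1). *)
Definition params := nat -> nat -> nat -> R.

(* P k = W_k ... W_1 (a dims k x dims 0 matrix), P 0 = identity. *)
Fixpoint prodmat (dims : nat -> nat) (W : params) (k : nat) : nat -> nat -> R :=
  match k with
  | O => fun i j => if Nat.eqb i j then 1 else 0
  | S k' => fun i j => rsum (dims k') (fun m => W (S k') i m * prodmat dims W k' m j)
  end.

(* w_prod = (W_L ... W_1)^T, a vector in R^d (d_L = 1, so row 0). *)
Definition wprod (dims : nat -> nat) (L : nat) (W : params) : nat -> R :=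
  fun j => prodmat dims W L 0%nat j.

Definition inner (d : nat) (u v : nat -> R) : R := rsum d (fun j => u j * v j).

Definition risk (ell : R -> R) (n d L : nat) (dims : nat -> nat)
  (z : nat -> nat -> R) (W : params) : R :=
  / INR n * rsum n (fun i => ell (inner d (wprod dims L W) (z i))).

Definition frob (dims : nat -> nat) (W : params) (k : nat) : R :=
  sqrt (rsum (dims k) (fun i => rsum (dims (k - 1)%nat) (fun j => (W k i j) ^ 2))).

Definition pnorm (dims : nat -> nat) (L : nat) (W : params) : R :=
  sqrt (rsum L (fun k' => let k := S k' in
          rsum (dims k) (fun i => rsum (dims (k - 1)%nat) (fun j => (W k i j) ^ 2)))).

Definition inBall (dims : nat -> nat) (L : nat) (Rad : R) (W : params) : Prop :=
  forall k, (1 <= k <= L)%nat -> frob dims W k <= Rad.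

Definition psub (W V : params) : params := fun k i j => W k i j - V k i j.

Definition upd (W : params) (k i j : nat) (t : R) : params :=
  fun k' i' j' =>
    if (Nat.eqb k' k && Nat.eqb i' i && Nat.eqb j' j)%bool then t else W k' i' j'.

Definition is_grad (dims : nat -> nat) (L : nat) (F : params -> R)
  (W g : params) : Prop :=
  forall k i j, (1 <= k <= L)%nat -> (i < dims k)%nat -> (j < dims (k - 1)%nat)%nat ->
    derivable_pt_lim (fun t => F (upd W k i j t)) (W k i j) (g k i j).

From Stdlib Require Import Reals Lra Lia Psatz.
Open Scope R_scope.

(* Every gradient entry of the risk is a sample average of
   l'(<w_prod, z>) * q_k(i) * f_(k-1)(j), where f_(k-1) = W_(k-1) ... W_1 z is a forward
   activation and q_k is the row W_L ... W_(k+1).  On B(R) these factors have norms at most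
   R^(k-1) and R^(L-k), and peeling off one layer at a time shows that they are Lipschitz in W
   with constants (k-1) R^(k-2) and (L-k) R^(L-k-1) for the joint norm.  Expanding the
   difference of two gradient entries by the product rule, with l' bounded by G and
   beta-Lipschitz, bounds each layer of the gradient difference by L R^(2L-2) (beta + G) |W - V|;
   the L layers together cost a factor sqrt L <= 2 L. *)

Lemma rsum_ext n f g : (forall i, (i < n)%nat -> f i = g i) -> rsum n f = rsum n g.
Proof.
  induction n as [|n IH]; intros H; simpl; [reflexivity|].
  rewrite IH, H by (lia || (intros; apply H; lia)); reflexivity.
Qed.

Lemma rsum_add n f g : rsum n (fun i => f i + g i) = rsum n f + rsum n g.
Proof. induction n as [|n IH]; simpl; [lra|]. rewrite IH; ring. Qed.

Lemma rsum_sub n f g : rsum n (fun i => f i - g i) = rsum n f - rsum n g.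
Proof. induction n as [|n IH]; simpl; [lra|]. rewrite IH; ring. Qed.

Lemma rsum_mull n c f : rsum n (fun i => c * f i) = c * rsum n f.
Proof. induction n as [|n IH]; simpl; [lra|]. rewrite IH; ring. Qed.

Lemma rsum_mulr n c f : rsum n (fun i => f i * c) = rsum n f * c.
Proof. induction n as [|n IH]; simpl; [lra|]. rewrite IH; ring. Qed.

Lemma rsum_const n c : rsum n (fun _ => c) = INR n * c.
Proof. induction n as [|n IH]; simpl rsum; [simpl; lra|]. rewrite IH, S_INR; ring. Qed.

Lemma rsum_0 n : rsum n (fun _ => 0) = 0.
Proof. rewrite rsum_const; ring. Qed.

Lemma exchange_rsum n m (f : nat -> nat -> R) :
  rsum n (fun i => rsum m (fun j => f i j)) = rsum m (fun j => rsum n (fun i => f i j)).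
Proof.
  induction n as [|n IH]; simpl.
  - symmetry; apply rsum_0.
  - rewrite IH, <- rsum_add; reflexivity.
Qed.

Lemma rsum_kronecker n i g :
  (i < n)%nat -> rsum n (fun b => if Nat.eqb b i then g b else 0) = g i.
Proof.
  induction n as [|n IH]; simpl; intros Hi; [lia|].
  destruct (Nat.eqb_spec n i) as [->|Hne].
  - rewrite (rsum_ext _ _ (fun _ => 0)), rsum_0; [ring|].
    intros k Hk; destruct (Nat.eqb_spec k i); [lia|reflexivity].
  - rewrite IH by lia; ring.
Qed.

Lemma rsum_le n f g : (forall i, (i < n)%nat -> f i <= g i) -> rsum n f <= rsum n g.
Proof.
  induction n as [|n IH]; simpl; intros H; [lra|].
  apply Rplus_le_compat; [apply IH; intros; apply H|apply H]; lia.
Qed.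

Lemma rsum_ge0 n f : (forall i, (i < n)%nat -> 0 <= f i) -> 0 <= rsum n f.
Proof. intros H; rewrite <- (rsum_0 n); apply rsum_le, H. Qed.

Lemma rsum_term_le n f k :
  (forall i, (i < n)%nat -> 0 <= f i) -> (k < n)%nat -> f k <= rsum n f.
Proof.
  induction n as [|n IH]; simpl; intros H Hk; [lia|].
  destruct (Nat.eq_dec k n) as [->|Hne].
  - assert (0 <= rsum n f) by (apply rsum_ge0; intros; apply H; lia); lra.
  - assert (f k <= rsum n f) by (apply IH; [intros; apply H|]; lia).
    assert (0 <= f n) by (apply H; lia); lra.
Qed.

Definition vnorm (n : nat) (x : nat -> R) : R := sqrt (rsum n (fun i => x i ^ 2)).

Definition mnorm (a b : nat) (M : nat -> nat -> R) : R :=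
  sqrt (rsum a (fun i => rsum b (fun j => M i j ^ 2))).

Lemma sumsq_ge0 n x : 0 <= rsum n (fun i => x i ^ 2).
Proof. apply rsum_ge0; intros; apply pow2_ge_0. Qed.

Lemma vnorm_ge0 n x : 0 <= vnorm n x.
Proof. apply sqrt_pos. Qed.

Lemma mnorm_ge0 a b M : 0 <= mnorm a b M.
Proof. apply sqrt_pos. Qed.

Lemma vnorm_sq n x : vnorm n x ^ 2 = rsum n (fun i => x i ^ 2).
Proof. apply pow2_sqrt, sumsq_ge0. Qed.

Lemma sqrt_le_of_sq_le a b : 0 <= b -> a <= b ^ 2 -> sqrt a <= b.
Proof. intros hb h; rewrite <- (sqrt_pow2 b hb); apply sqrt_le_1_alt, h. Qed.

Lemma vnorm_ext n x y : (forall i, (i < n)%nat -> x i = y i) -> vnorm n x = vnorm n y.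
Proof. intros H; unfold vnorm; f_equal; apply rsum_ext; intros i Hi; rewrite H; auto. Qed.

Lemma mnorm_ext a b M N :
  (forall i j, (i < a)%nat -> (j < b)%nat -> M i j = N i j) -> mnorm a b M = mnorm a b N.
Proof.
  intros H; unfold mnorm; f_equal.
  apply rsum_ext; intros; apply rsum_ext; intros; rewrite H; auto.
Qed.

Lemma cauchy_schwarz_step a b c u v :
  0 <= b -> 0 <= c -> a ^ 2 <= b * c -> (a + u * v) ^ 2 <= (b + u ^ 2) * (c + v ^ 2).
Proof.
  intros hb hc habc.
  assert (cross : 2 * a * u * v <= b * v ^ 2 + u ^ 2 * c).
  { destruct (Rle_lt_or_eq_dec 0 b hb) as [hb'|<-].
    - (* b (b v^2 + u^2 c - 2 a u v) = (b v - a u)^2 + u^2 (b c - a^2) *)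
      apply Rmult_le_reg_l with b; [exact hb'|].
      assert (0 <= (b * v - a * u) ^ 2) by apply pow2_ge_0.
      assert (0 <= u ^ 2 * (b * c - a ^ 2)) by (apply Rmult_le_pos; [apply pow2_ge_0|lra]).
      nra.
    - assert (a = 0) by nra; subst; nra. }
  nra.
Qed.

Lemma cauchy_schwarz_sq n x y :
  rsum n (fun i => x i * y i) ^ 2 <= rsum n (fun i => x i ^ 2) * rsum n (fun i => y i ^ 2).
Proof.
  induction n as [|n IH]; cbn [rsum]; [lra|].
  apply cauchy_schwarz_step; auto using sumsq_ge0.
Qed.

Lemma cauchy_schwarz n x y : Rabs (rsum n (fun i => x i * y i)) <= vnorm n x * vnorm n y.
Proof.
  unfold vnorm; rewrite <- sqrt_mult by apply sumsq_ge0.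
  rewrite <- sqrt_Rsqr_abs; apply sqrt_le_1_alt.
  rewrite Rsqr_pow2; apply cauchy_schwarz_sq.
Qed.

Lemma vnorm_add_le n x y : vnorm n (fun i => x i + y i) <= vnorm n x + vnorm n y.
Proof.
  pose proof (vnorm_ge0 n x); pose proof (vnorm_ge0 n y).
  apply sqrt_le_of_sq_le; [lra|].
  rewrite (rsum_ext _ _ (fun i => x i ^ 2 + (2 * (x i * y i) + y i ^ 2))) by (intros; ring).
  rewrite !rsum_add, rsum_mull, <- !vnorm_sq.
  pose proof (cauchy_schwarz n x y).
  pose proof (Rle_abs (rsum n (fun i => x i * y i))).
  nra.
Qed.

Lemma vnorm_scale n c x : vnorm n (fun i => c * x i) = Rabs c * vnorm n x.
Proof.
  unfold vnorm; rewrite (rsum_ext _ _ (fun i => c ^ 2 * x i ^ 2)) by (intros; ring).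
  rewrite rsum_mull, sqrt_mult by (apply pow2_ge_0 || apply sumsq_ge0).
  rewrite <- sqrt_Rsqr_abs, Rsqr_pow2; reflexivity.
Qed.

Lemma vnorm_le_abs_le n x y :
  (forall i, (i < n)%nat -> Rabs (x i) <= y i) -> vnorm n x <= vnorm n y.
Proof.
  intros H; apply sqrt_le_1_alt, rsum_le; intros i Hi.
  specialize (H i Hi); pose proof (Rabs_pos (x i)).
  rewrite <- (pow2_abs (x i)); nra.
Qed.

Lemma abs_le_vnorm n x i : (i < n)%nat -> Rabs (x i) <= vnorm n x.
Proof.
  intros Hi; rewrite <- sqrt_Rsqr_abs, Rsqr_pow2.
  apply sqrt_le_1_alt, (rsum_term_le n (fun i => x i ^ 2)); auto.
  intros; apply pow2_ge_0.
Qed.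

Lemma mnorm_rows a b M : mnorm a b M = vnorm a (fun i => vnorm b (M i)).
Proof.
  unfold mnorm, vnorm at 1; f_equal.
  apply rsum_ext; intros; symmetry; apply vnorm_sq.
Qed.

Lemma mnorm_tr a b M : mnorm a b M = mnorm b a (fun j i => M i j).
Proof. unfold mnorm; f_equal; apply exchange_rsum. Qed.

Lemma mnorm_add_le a b M N :
  mnorm a b (fun i j => M i j + N i j) <= mnorm a b M + mnorm a b N.
Proof.
  rewrite !mnorm_rows; eapply Rle_trans; [|apply vnorm_add_le].
  apply vnorm_le_abs_le; intros i Hi.
  rewrite Rabs_right by apply Rle_ge, vnorm_ge0.
  apply (vnorm_add_le b (M i) (N i)).
Qed.

Lemma mnorm_scale a b c M : mnorm a b (fun i j => c * M i j) = Rabs c * mnorm a b M.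
Proof.
  rewrite !mnorm_rows, (vnorm_ext _ _ (fun i => Rabs c * vnorm b (M i))).
  - rewrite vnorm_scale, Rabs_Rabsolu; reflexivity.
  - intros; apply (vnorm_scale b c (M i)).
Qed.

Lemma mnorm_outer a b x y : mnorm a b (fun i j => x i * y j) = vnorm a x * vnorm b y.
Proof.
  unfold mnorm, vnorm; rewrite <- sqrt_mult by apply sumsq_ge0; f_equal.
  rewrite <- rsum_mulr; apply rsum_ext; intros.
  rewrite <- rsum_mull; apply rsum_ext; intros; ring.
Qed.

Lemma mnorm_rsum_le a b n (X : nat -> nat -> nat -> R) :
  mnorm a b (fun i j => rsum n (fun s => X s i j)) <= rsum n (fun s => mnorm a b (X s)).
Proof.
  induction n as [|n IH]; simpl.
  - unfold mnorm; rewrite (rsum_ext _ _ (fun _ => 0)), rsum_0, sqrt_0; [lra|].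
    intros; rewrite (rsum_ext _ _ (fun _ => 0)); [apply rsum_0|intros; ring].
  - eapply Rle_trans; [apply (mnorm_add_le a b (fun i j => rsum n (fun s => X s i j)) (X n))|].
    lra.
Qed.

Lemma mnorm_mean_le a b n (X : nat -> nat -> nat -> R) C :
  0 <= C -> (forall s, (s < n)%nat -> mnorm a b (X s) <= C) ->
  mnorm a b (fun i j => / INR n * rsum n (fun s => X s i j)) <= C.
Proof.
  intros hC hX; rewrite mnorm_scale.
  destruct n as [|n]; [cbn [INR]; rewrite Rinv_0, Rabs_R0; lra|].
  assert (hn : 0 < INR (S n)) by (apply lt_0_INR; lia).
  rewrite Rabs_right by (apply Rle_ge, Rlt_le, Rinv_0_lt_compat, hn).
  apply Rle_trans with (/ INR (S n) * rsum (S n) (fun _ => C)).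
  - apply Rmult_le_compat_l; [apply Rlt_le, Rinv_0_lt_compat, hn|].
    eapply Rle_trans; [apply mnorm_rsum_le|apply rsum_le, hX].
  - rewrite rsum_const; field_simplify; lra.
Qed.

Lemma mulmx_vec_le a b M v :
  vnorm a (fun r => rsum b (fun c => M r c * v c)) <= mnorm a b M * vnorm b v.
Proof.
  apply sqrt_le_of_sq_le; [apply Rmult_le_pos; apply sqrt_pos|].
  rewrite Rpow_mult_distr, vnorm_sq; unfold mnorm.
  rewrite pow2_sqrt by (apply rsum_ge0; intros; apply sumsq_ge0).
  rewrite <- rsum_mulr; apply rsum_le; intros; apply cauchy_schwarz_sq.
Qed.

Lemma vec_mulmx_le a b q M :
  vnorm b (fun c => rsum a (fun r => q r * M r c)) <= vnorm a q * mnorm a b M.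
Proof.
  rewrite mnorm_tr, Rmult_comm.
  rewrite (vnorm_ext _ _ (fun c => rsum a (fun r => M r c * q r))); [apply mulmx_vec_le|].
  intros; apply rsum_ext; intros; ring.
Qed.

Lemma mulmx_vec_sub_le a b M N x y :
  vnorm a (fun r => rsum b (fun c => M r c * x c) - rsum b (fun c => N r c * y c))
  <= mnorm a b (fun r c => M r c - N r c) * vnorm b x + mnorm a b N * vnorm b (fun c => x c - y c).
Proof.
  rewrite (vnorm_ext _ _ (fun r => rsum b (fun c => (M r c - N r c) * x c)
                                  + rsum b (fun c => N r c * (x c - y c)))).
  - eapply Rle_trans; [apply vnorm_add_le|apply Rplus_le_compat; apply mulmx_vec_le].
  - intros; rewrite <- rsum_add, <- rsum_sub; apply rsum_ext; intros; ring.
Qed.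

Lemma vec_mulmx_sub_le a b p q M N :
  vnorm b (fun c => rsum a (fun r => p r * M r c) - rsum a (fun r => q r * N r c))
  <= vnorm a (fun r => p r - q r) * mnorm a b M + vnorm a q * mnorm a b (fun r c => M r c - N r c).
Proof.
  rewrite (vnorm_ext _ _ (fun c => rsum a (fun r => (p r - q r) * M r c)
                                  + rsum a (fun r => q r * (M r c - N r c)))).
  - eapply Rle_trans; [apply vnorm_add_le|apply Rplus_le_compat; apply vec_mulmx_le].
  - intros; rewrite <- rsum_add, <- rsum_sub; apply rsum_ext; intros; ring.
Qed.

Lemma mnorm_outer_sub_le a b x1 x2 y1 y2 :
  mnorm a b (fun i j => x1 i * y1 j - x2 i * y2 j)
  <= vnorm a (fun i => x1 i - x2 i) * vnorm b y1 + vnorm a x2 * vnorm b (fun j => y1 j - y2 j).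
Proof.
  rewrite (mnorm_ext _ _ _ (fun i j => (x1 i - x2 i) * y1 j + x2 i * (y1 j - y2 j)))
    by (intros; ring).
  rewrite <- !mnorm_outer; apply mnorm_add_le.
Qed.

Lemma product_lipschitz Rad a b p q D dx dy x y :
  0 <= Rad -> 0 <= dx -> 0 <= dy -> 0 <= x <= p -> 0 <= y <= q ->
  Rad * dx <= a * p * D -> Rad * dy <= b * q * D ->
  Rad * (dx * y + x * dy) <= (a + b) * (p * q) * D.
Proof.
  intros hR hdx hdy hx hy hA hB.
  assert (0 <= Rad * dx) by nra; assert (0 <= Rad * dy) by nra.
  assert (Rad * dx * y <= a * p * D * q) by (apply Rmult_le_compat; lra).
  assert (x * (Rad * dy) <= p * (b * q * D)) by (apply Rmult_le_compat; lra).
  nra.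
Qed.

Fixpoint forward (dims : nat -> nat) (W : params) (v : nat -> R) (m : nat) : nat -> R :=
  match m with
  | O => v
  | S m' => fun a => rsum (dims m') (fun b => W (S m') a b * forward dims W v m' b)
  end.

(* [backward dims L W c] is the single row of W_L ... W_(L-c+1), of length [dims (L - c)]. *)
Fixpoint backward (dims : nat -> nat) (L : nat) (W : params) (c : nat) : nat -> R :=
  match c with
  | O => fun b => if Nat.eqb b 0 then 1 else 0
  | S c' => fun b => rsum (dims (L - c')%nat) (fun a => backward dims L W c' a * W (L - c')%nat a b)
  end.

Section Network.
Variables (dims : nat -> nat) (L : nat).
Hypothesis hdL : dims L = 1%nat.

Lemma forward_prodmat W v m a : (a < dims m)%nat ->
  rsum (dims 0) (fun j => prodmat dims W m a j * v j) = forward dims W v m a.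
Proof.
  revert a; induction m as [|m IH]; intros a Ha; simpl.
  - rewrite (rsum_ext _ _ (fun j => if Nat.eqb j a then v j else 0)); [apply rsum_kronecker, Ha|].
    intros j _; rewrite Nat.eqb_sym; destruct (Nat.eqb j a); ring.
  - rewrite (rsum_ext _ _ (fun j => rsum (dims m) (fun b => W (S m) a b * (prodmat dims W m b j * v j)))).
    + rewrite exchange_rsum; apply rsum_ext; intros b Hb; rewrite rsum_mull, IH; auto.
    + intros; rewrite <- rsum_mulr; apply rsum_ext; intros; ring.
Qed.

Lemma forward_backward W v c : (c <= L)%nat ->
  forward dims W v L 0 = rsum (dims (L - c)) (fun b => backward dims L W c b * forward dims W v (L - c) b).
Proof.
  induction c as [|c IH]; intros hc.
  - rewrite Nat.sub_0_r, hdL; simpl; ring.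
  - rewrite IH by lia; cbn [backward].
    replace (L - c)%nat with (S (L - S c)) by lia; cbn [forward].
    rewrite (rsum_ext _ _ (fun a => rsum (dims (L - S c)) (fun b =>
      backward dims L W c a * W (S (L - S c)) a b * forward dims W v (L - S c) b))).
    + rewrite exchange_rsum; apply rsum_ext; intros; rewrite <- rsum_mulr; reflexivity.
    + intros; rewrite <- rsum_mull; apply rsum_ext; intros; ring.
Qed.

Lemma forward_ext W W' v m : (forall l a b, (1 <= l <= m)%nat -> W l a b = W' l a b) ->
  forall a, forward dims W v m a = forward dims W' v m a.
Proof.
  induction m as [|m IH]; intros H a; simpl; [reflexivity|].
  apply rsum_ext; intros; rewrite H, IH by (lia || (intros; apply H; lia)); reflexivity.
Qed.

Lemma backward_ext W W' c : (c <= L)%nat ->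
  (forall l a b, (L - c < l)%nat -> W l a b = W' l a b) ->
  forall b, backward dims L W c b = backward dims L W' c b.
Proof.
  induction c as [|c IH]; intros hc H b; simpl; [reflexivity|].
  apply rsum_ext; intros; rewrite IH, H by (lia || (intros; apply H; lia)); reflexivity.
Qed.

Lemma forward_upd W v m i j t : (S m <= L)%nat -> (i < dims (S m))%nat -> (j < dims m)%nat ->
  forward dims (upd W (S m) i j t) v L 0 =
  forward dims W v L 0 + (t - W (S m) i j) * (backward dims L W (L - S m) i * forward dims W v m j).
Proof.
  intros hm hi hj.
  assert (other : forall l a b, l <> S m -> upd W (S m) i j t l a b = W l a b).
  { intros l a b hl; unfold upd; apply Nat.eqb_neq in hl; rewrite hl; reflexivity. }
  rewrite !(forward_backward _ v (L - S m)) by lia.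
  replace (L - (L - S m))%nat with (S m) by lia; cbn [forward].
  rewrite <- (rsum_kronecker (dims (S m)) i (fun b => (t - W (S m) i j) *
    (backward dims L W (L - S m) b * forward dims W v m j))) by exact hi.
  rewrite <- rsum_add; apply rsum_ext; intros b Hb.
  rewrite (backward_ext (upd W (S m) i j t) W) by (lia || (intros; apply other; lia)).
  rewrite (rsum_ext (dims m) _ (fun p => W (S m) b p * forward dims W v m p +
      (if Nat.eqb b i then if Nat.eqb p j then (t - W (S m) i j) * forward dims W v m p else 0 else 0))).
  - rewrite rsum_add; destruct (Nat.eqb_spec b i) as [->|_].
    + rewrite rsum_kronecker by exact hj; ring.
    + rewrite rsum_0; ring.
  - intros p _; rewrite (forward_ext (upd W (S m) i j t) W) by (intros; apply other; lia).
    unfold upd; rewrite Nat.eqb_refl.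
    destruct (Nat.eqb_spec b i), (Nat.eqb_spec p j); subst; simpl; ring.
Qed.

End Network.

Lemma derivable_pt_lim_rsum n (F : nat -> R -> R) dF x :
  (forall s, (s < n)%nat -> derivable_pt_lim (F s) x (dF s)) ->
  derivable_pt_lim (fun t => rsum n (fun s => F s t)) x (rsum n dF).
Proof.
  induction n as [|n IH]; intros H; simpl.
  - apply derivable_pt_lim_const.
  - apply (derivable_pt_lim_plus (fun t => rsum n (fun s => F s t)) (F n));
      [apply IH; intros|]; apply H; lia.
Qed.

Lemma derivable_pt_lim_comp_affine f f' A B x :
  (forall y, derivable_pt_lim f y (f' y)) ->
  derivable_pt_lim (fun t => f (A + (t - x) * B)) x (f' A * B).
Proof.
  intros hf.
  assert (affine : derivable_pt_lim (fun t => A + (t - x) * B) x B).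
  { intros eps heps; exists (mkposreal 1 Rlt_0_1); intros h hh _.
    replace ((A + (x + h - x) * B - (A + (x - x) * B)) / h - B) with 0 by (field; exact hh).
    rewrite Rabs_R0; exact heps. }
  pose proof (derivable_pt_lim_comp _ _ _ _ _ affine (hf (A + (x - x) * B))) as h.
  replace (A + (x - x) * B) with A in h by ring; exact h.
Qed.

Lemma risk_grad (ell ell' : R -> R) n d L dims z W g m i j :
  dims 0%nat = d -> dims L = 1%nat -> (forall y, derivable_pt_lim ell y (ell' y)) ->
  is_grad dims L (risk ell n d L dims z) W g ->
  (S m <= L)%nat -> (i < dims (S m))%nat -> (j < dims m)%nat ->
  g (S m) i j = / INR n * rsum n (fun s => ell' (forward dims W (z s) L 0) *
                  (backward dims L W (L - S m) i * forward dims W (z s) m j)).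
Proof.
  intros hd0 hdL hell hg hm hi hj.
  assert (hj' : (j < dims (S m - 1))%nat) by (rewrite Nat.sub_succ, Nat.sub_0_r; exact hj).
  eapply uniqueness_limite; [exact (hg (S m) i j ltac:(lia) hi hj')|].
  apply derivable_pt_lim_ext with (fun t => / INR n * rsum n (fun s =>
    ell (forward dims W (z s) L 0 + (t - W (S m) i j) *
         (backward dims L W (L - S m) i * forward dims W (z s) m j)))).
  - intros t; unfold risk; f_equal; apply rsum_ext; intros s _; f_equal.
    unfold inner, wprod; rewrite <- hd0, forward_prodmat by lia.
    rewrite forward_upd; auto.
  - apply derivable_pt_lim_scal, derivable_pt_lim_rsum; intros.
    apply derivable_pt_lim_comp_affine, hell.
Qed.

Lemma frob_succ dims X m : frob dims X (S m) = mnorm (dims (S m)) (dims m) (X (S m)).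
Proof. unfold frob; rewrite Nat.sub_succ, Nat.sub_0_r; reflexivity. Qed.

Lemma pnorm_frob dims L X : pnorm dims L X = sqrt (rsum L (fun k => frob dims X (S k) ^ 2)).
Proof.
  unfold pnorm; f_equal; apply rsum_ext; intros.
  unfold frob; rewrite pow2_sqrt; [reflexivity|].
  apply rsum_ge0; intros; apply sumsq_ge0.
Qed.

Lemma frob_le_pnorm dims L X m : (m < L)%nat -> frob dims X (S m) <= pnorm dims L X.
Proof.
  intros hm; rewrite pnorm_frob, <- (sqrt_pow2 (frob dims X (S m))) by apply sqrt_pos.
  apply sqrt_le_1_alt, (rsum_term_le L (fun k => frob dims X (S k) ^ 2)); auto.
  intros; apply pow2_ge_0.
Qed.

Lemma pnorm_le dims L X C : 0 <= C -> (forall m, (m < L)%nat -> frob dims X (S m) <= C) ->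
  pnorm dims L X <= sqrt (INR L) * C.
Proof.
  intros hC hX; rewrite pnorm_frob, <- (sqrt_pow2 C hC), <- sqrt_mult by (apply pos_INR || apply pow2_ge_0).
  apply sqrt_le_1_alt; rewrite <- rsum_const; apply rsum_le; intros m hm.
  assert (0 <= frob dims X (S m)) by apply sqrt_pos.
  pose proof (hX m hm); nra.
Qed.

Section Ball.
Variables (dims : nat -> nat) (L : nat) (Rad : R) (W V : params).
Hypothesis hR : 1 <= Rad.
Hypothesis hdL : dims L = 1%nat.
Hypothesis hW : inBall dims L Rad W.
Hypothesis hV : inBall dims L Rad V.
Let D := pnorm dims L (psub W V).

Lemma layer_le_radius X m : inBall dims L Rad X -> (m < L)%nat ->
  mnorm (dims (S m)) (dims m) (X (S m)) <= Rad.
Proof. intros hX hm; rewrite <- (frob_succ dims X m); apply hX; lia. Qed.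

Lemma layer_sub_le m : (m < L)%nat ->
  mnorm (dims (S m)) (dims m) (fun a b => W (S m) a b - V (S m) a b) <= D.
Proof.
  intros hm; pose proof (frob_le_pnorm dims L (psub W V) m hm) as h.
  rewrite frob_succ in h; exact h.
Qed.

Lemma forward_norm_le X v m : inBall dims L Rad X -> (m <= L)%nat ->
  vnorm (dims m) (forward dims X v m) <= Rad ^ m * vnorm (dims 0) v.
Proof.
  intros hX; induction m as [|m IH]; intros hm; simpl; [lra|].
  eapply Rle_trans; [apply mulmx_vec_le|].
  rewrite Rmult_assoc; apply Rmult_le_compat; auto using mnorm_ge0, vnorm_ge0.
  - apply layer_le_radius; auto; lia.
  - apply IH; lia.
Qed.

Lemma backward_norm_le X c : inBall dims L Rad X -> (c <= L)%nat ->
  vnorm (dims (L - c)) (backward dims L X c) <= Rad ^ c.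
Proof.
  intros hX; induction c as [|c IH]; intros hc.
  - rewrite Nat.sub_0_r, hdL; unfold vnorm; simpl.
    rewrite Rplus_0_l, !Rmult_1_l, sqrt_1; lra.
  - cbn [backward]; eapply Rle_trans; [apply vec_mulmx_le|].
    replace (L - c)%nat with (S (L - S c)) by lia; rewrite Rmult_comm; simpl pow.
    apply Rmult_le_compat; auto using mnorm_ge0, vnorm_ge0.
    + apply layer_le_radius; auto; lia.
    + replace (S (L - S c)) with (L - c)%nat by lia; apply IH; lia.
Qed.

(* The Lipschitz bounds are multiplied by [Rad] to express [m * Rad ^ (m - 1)] without
   natural-number subtraction. *)
Lemma forward_lipschitz v m : (m <= L)%nat ->
  Rad * vnorm (dims m) (fun a => forward dims W v m a - forward dims V v m a)
  <= INR m * (Rad ^ m * vnorm (dims 0) v) * D.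
Proof.
  induction m as [|m IH]; intros hm.
  - rewrite (vnorm_ext _ _ (fun a => 0 * v a)) by (intros; simpl; ring).
    rewrite vnorm_scale, Rabs_R0; simpl; lra.
  - cbn [forward]; eapply Rle_trans.
    { apply Rmult_le_compat_l; [lra|apply mulmx_vec_sub_le]. }
    replace (INR (S m) * (Rad ^ S m * vnorm (dims 0) v) * D)
      with ((1 + INR m) * (Rad * (Rad ^ m * vnorm (dims 0) v)) * D) by (rewrite S_INR; simpl; ring).
    apply product_lipschitz; auto using mnorm_ge0, vnorm_ge0; try lra.
    + split; [apply mnorm_ge0|apply layer_le_radius; auto; lia].
    + split; [apply vnorm_ge0|apply forward_norm_le; auto; lia].
    + pose proof (layer_sub_le m ltac:(lia)); nra.
    + apply IH; lia.
Qed.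

Lemma backward_lipschitz c : (c <= L)%nat ->
  Rad * vnorm (dims (L - c)) (fun b => backward dims L W c b - backward dims L V c b)
  <= INR c * Rad ^ c * D.
Proof.
  induction c as [|c IH]; intros hc.
  - rewrite (vnorm_ext _ _ (fun a => 0 * 0)) by (intros; simpl; destruct (Nat.eqb i 0); ring).
    rewrite vnorm_scale, Rabs_R0; simpl; lra.
  - cbn [backward]; eapply Rle_trans.
    { apply Rmult_le_compat_l; [lra|apply vec_mulmx_sub_le]. }
    replace (L - c)%nat with (S (L - S c)) by lia.
    replace (INR (S c) * Rad ^ S c * D) with ((INR c + 1) * (Rad ^ c * Rad) * D)
      by (rewrite S_INR; simpl; ring).
    apply product_lipschitz; auto using mnorm_ge0, vnorm_ge0; try lra.
    + split; [apply vnorm_ge0|].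
      replace (S (L - S c)) with (L - c)%nat by lia; apply backward_norm_le; auto; lia.
    + split; [apply mnorm_ge0|apply layer_le_radius; auto; lia].
    + replace (S (L - S c)) with (L - c)%nat by lia; apply IH; lia.
    + pose proof (layer_sub_le (L - S c) ltac:(lia)); nra.
Qed.

End Ball.

Lemma lipschitz_const_ge0 (f : R -> R) beta :
  (forall x y, Rabs (f x - f y) <= beta * Rabs (x - y)) -> 0 <= beta.
Proof.
  intros hf; pose proof (hf 1 0); pose proof (Rabs_pos (f 1 - f 0)).
  rewrite Rminus_0_r, Rabs_R1 in *; lra.
Qed.

Lemma bound_ge0 (f : R -> R) G : (forall x, Rabs (f x) <= G) -> 0 <= G.
Proof. intros hf; pose proof (hf 0); pose proof (Rabs_pos (f 0)); lra. Qed.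

Section SampleGradient.
Variables (dims : nat -> nat) (L : nat) (Rad : R) (W V : params) (v : nat -> R).
Hypothesis hL : (1 <= L)%nat.
Hypothesis hR : 1 <= Rad.
Hypothesis hdL : dims L = 1%nat.
Hypothesis hW : inBall dims L Rad W.
Hypothesis hV : inBall dims L Rad V.
Hypothesis hv : vnorm (dims 0) v <= 1.
Let D := pnorm dims L (psub W V).
Let E := Rad ^ (L - 1).

Let D_ge0 : 0 <= D.
Proof. apply sqrt_pos. Qed.

Let E_ge1 : 1 <= E.
Proof. unfold E; rewrite <- (pow1 (L - 1)); apply pow_incr; lra. Qed.

Let E_split m : (m < L)%nat -> E = Rad ^ (L - S m) * Rad ^ m.
Proof. intros hm; unfold E; rewrite <- pow_add; f_equal; lia. Qed.

Lemma output_lipschitz :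
  Rabs (forward dims W v L 0 - forward dims V v L 0) <= INR L * E * D.
Proof.
  assert (hRL : Rad ^ L = Rad * E)
    by (unfold E; replace L with (S (L - 1)) at 1 by lia; reflexivity).
  assert (0 <= INR L * E * D)
    by (apply Rmult_le_pos; [apply Rmult_le_pos; [apply pos_INR|lra]|exact D_ge0]).
  apply Rmult_le_reg_l with Rad; [lra|].
  eapply Rle_trans; [apply Rmult_le_compat_l; [lra|]|].
  - apply (abs_le_vnorm (dims L) (fun a => forward dims W v L a - forward dims V v L a)); lia.
  - eapply Rle_trans; [apply (forward_lipschitz dims L Rad W V); auto|].
    fold D; rewrite hRL.
    assert (0 <= Rad * (INR L * E * D)) by (apply Rmult_le_pos; lra).
    nra.
Qed.

Lemma activation_outer_norm_le m : (m < L)%nat ->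
  vnorm (dims (S m)) (backward dims L W (L - S m)) * vnorm (dims m) (forward dims W v m) <= E.
Proof.
  intros hm; rewrite (E_split m hm).
  apply Rmult_le_compat; try apply vnorm_ge0.
  - replace (S m) with (L - (L - S m))%nat at 1 by lia; apply backward_norm_le; auto; lia.
  - eapply Rle_trans; [apply (forward_norm_le dims L Rad); auto; lia|].
    pose proof (pow_le Rad m ltac:(lra)); nra.
Qed.

Lemma activation_outer_lipschitz m : (m < L)%nat ->
  Rad * mnorm (dims (S m)) (dims m) (fun i j =>
    backward dims L W (L - S m) i * forward dims W v m j -
    backward dims L V (L - S m) i * forward dims V v m j)
  <= INR L * E * D.
Proof.
  intros hm; set (c := (L - S m)%nat).
  assert (hLc : (L - c)%nat = S m) by (unfold c; lia).
  assert (hcm : INR c + INR m <= INR L) by (rewrite <- plus_INR; apply le_INR; unfold c; lia).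
  eapply Rle_trans; [apply Rmult_le_compat_l; [lra|apply mnorm_outer_sub_le]|].
  apply Rle_trans with ((INR c + INR m) * (Rad ^ c * Rad ^ m) * D).
  - apply product_lipschitz; try split; try apply vnorm_ge0; try lra.
    + rewrite <- hLc; apply backward_norm_le; auto; unfold c; lia.
    + eapply Rle_trans; [apply (forward_norm_le dims L Rad); auto; lia|].
      pose proof (pow_le Rad m ltac:(lra)); nra.
    + rewrite <- hLc; apply backward_lipschitz; auto; unfold c; lia.
    + eapply Rle_trans; [apply (forward_lipschitz dims L Rad W V); auto; lia|].
      assert (0 <= INR m * Rad ^ m * D)
        by (apply Rmult_le_pos; [apply Rmult_le_pos; [apply pos_INR|apply pow_le; lra]|exact D_ge0]).
      fold D; nra.
  - replace (Rad ^ c * Rad ^ m) with E by (apply E_split, hm); apply Rmult_le_compat_r; [exact D_ge0|].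
    apply Rmult_le_compat_r; lra.
Qed.

Variables (ell' : R -> R) (beta G : R).
Hypothesis hlip : forall x y, Rabs (ell' x - ell' y) <= beta * Rabs (x - y).
Hypothesis hbnd : forall x, Rabs (ell' x) <= G.

Definition sample_grad (X : params) (m : nat) : nat -> nat -> R :=
  fun i j => ell' (forward dims X v L 0) *
             (backward dims L X (L - S m) i * forward dims X v m j).

Lemma sample_grad_lipschitz m : (m < L)%nat ->
  mnorm (dims (S m)) (dims m) (fun i j => sample_grad W m i j - sample_grad V m i j)
  <= INR L * (E * E) * (beta + G) * D.
Proof.
  intros hm.
  set (q X := backward dims L X (L - S m)); set (f X := forward dims X v m).
  set (e X := ell' (forward dims X v L 0)).
  rewrite (mnorm_ext _ _ _ (fun i j =>
             (e W - e V) * (q W i * f W j) + e V * (q W i * f W j - q V i * f V j)))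
    by (intros; unfold sample_grad; fold (q W) (q V) (f W) (f V) (e W) (e V); ring).
  eapply Rle_trans; [apply mnorm_add_le|]; rewrite !mnorm_scale, mnorm_outer.
  pose proof (lipschitz_const_ge0 ell' beta hlip); pose proof (bound_ge0 ell' G hbnd).
  assert (hLED : 0 <= INR L * E * D)
    by (apply Rmult_le_pos; [apply Rmult_le_pos; [apply pos_INR|lra]|exact D_ge0]).
  assert (loss_term : Rabs (e W - e V) * (vnorm (dims (S m)) (q W) * vnorm (dims m) (f W))
                      <= beta * (INR L * E * D) * E).
  { apply Rmult_le_compat; try apply Rabs_pos.
    - apply Rmult_le_pos; apply vnorm_ge0.
    - eapply Rle_trans; [apply hlip|apply Rmult_le_compat_l; [lra|apply output_lipschitz]].
    - apply activation_outer_norm_le, hm. }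
  assert (activation_term :
    Rabs (e V) * mnorm (dims (S m)) (dims m) (fun i j => q W i * f W j - q V i * f V j)
    <= G * (INR L * E * D)).
  { apply Rmult_le_compat; [apply Rabs_pos|apply mnorm_ge0|apply hbnd|].
    set (outer := mnorm (dims (S m)) (dims m) (fun i j => q W i * f W j - q V i * f V j)).
    apply Rle_trans with (Rad * outer); [|exact (activation_outer_lipschitz m hm)].
    assert (0 <= outer) by apply mnorm_ge0.
    nra. }
  assert (0 <= G * (INR L * E * D)) by (apply Rmult_le_pos; lra).
  nra.
Qed.

End SampleGradient.

Lemma risk_grad_layer_lipschitz (ell ell' : R -> R) (beta G : R)
  (n d L : nat) (dims : nat -> nat) (z : nat -> nat -> R) (Rad : R)
  (W V gW gV : params) m :
  dims 0%nat = d -> dims L = 1%nat ->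
  (forall i, (i < n)%nat -> sqrt (rsum d (fun j => (z i j) ^ 2)) <= 1) ->
  (forall x, derivable_pt_lim ell x (ell' x)) ->
  (forall x y, Rabs (ell' x - ell' y) <= beta * Rabs (x - y)) ->
  (forall x, Rabs (ell' x) <= G) ->
  1 <= Rad -> inBall dims L Rad W -> inBall dims L Rad V ->
  is_grad dims L (risk ell n d L dims z) W gW ->
  is_grad dims L (risk ell n d L dims z) V gV ->
  (m < L)%nat ->
  frob dims (psub gW gV) (S m)
  <= INR L * (Rad ^ (L - 1) * Rad ^ (L - 1)) * (beta + G) * pnorm dims L (psub W V).
Proof.
  intros hd0 hdL hz hell hlip hbnd hR hW hV hgW hgV hm.
  rewrite frob_succ, (mnorm_ext _ _ _ (fun i j => / INR n * rsum n (fun s =>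
    sample_grad dims L (z s) ell' W m i j - sample_grad dims L (z s) ell' V m i j))).
  - apply mnorm_mean_le.
    + pose proof (lipschitz_const_ge0 ell' beta hlip); pose proof (bound_ge0 ell' G hbnd).
      assert (0 <= Rad ^ (L - 1)) by (apply pow_le; lra).
      assert (0 <= pnorm dims L (psub W V)) by apply sqrt_pos.
      pose proof (pos_INR L).
      apply Rmult_le_pos; [apply Rmult_le_pos; [apply Rmult_le_pos|]|]; nra.
    + intros s hs; apply sample_grad_lipschitz; auto; [lia|].
      unfold vnorm; rewrite hd0; apply hz, hs.
  - intros i j hi hj; unfold psub.
    rewrite (risk_grad ell ell' n d L dims z W gW), (risk_grad ell ell' n d L dims z V gV) by auto.
    rewrite <- Rmult_minus_distr_l, <- rsum_sub; reflexivity.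
Qed.

Theorem mainTheorem8
  (ell ell' : R -> R) (beta G : R)
  (n d L : nat) (dims : nat -> nat) (z : nat -> nat -> R) (Rad : R)
  (hL : (1 <= L)%nat) (hd0 : dims 0%nat = d) (hdL : dims L = 1%nat)
  (hz : forall i, (i < n)%nat -> sqrt (rsum d (fun j => (z i j) ^ 2)) <= 1)
  (hderiv : forall x, derivable_pt_lim ell x (ell' x))
  (hlip : forall x y, Rabs (ell' x - ell' y) <= beta * Rabs (x - y))
  (hbnd : forall x, Rabs (ell' x) <= G)
  (hR : 1 <= Rad) :
  forall (W V gW gV : params),
    inBall dims L Rad W -> inBall dims L Rad V ->
    is_grad dims L (risk ell n d L dims z) W gW ->
    is_grad dims L (risk ell n d L dims z) V gV ->
    pnorm dims L (psub gW gV)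
      <= 2 * (INR L) ^ 2 * Rad ^ (2 * L - 2) * (beta + G) * pnorm dims L (psub W V).
Proof.
  intros W V gW gV hW hV hgW hgV.
  set (C := (beta + G) * pnorm dims L (psub W V) * Rad ^ (2 * L - 2)).
  assert (hpow : Rad ^ (2 * L - 2) = Rad ^ (L - 1) * Rad ^ (L - 1))
    by (rewrite <- pow_add; f_equal; lia).
  assert (hC : 0 <= C).
  { pose proof (lipschitz_const_ge0 ell' beta hlip); pose proof (bound_ge0 ell' G hbnd).
    apply Rmult_le_pos; [apply Rmult_le_pos; [lra|apply sqrt_pos]|apply pow_le; lra]. }
  assert (hL1 : 1 <= INR L) by (apply (le_INR 1); exact hL).
  assert (hsqrt : sqrt (INR L) <= INR L).
  { rewrite <- (sqrt_pow2 (INR L)) at 2 by lra; apply sqrt_le_1_alt; nra. }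
  eapply Rle_trans; [apply (pnorm_le dims L _ (INR L * C))|].
  - apply Rmult_le_pos; lra.
  - intros m hm; unfold C; rewrite hpow.
    eapply Rle_trans; [apply (risk_grad_layer_lipschitz ell ell' beta G n d L dims z Rad W V gW gV); auto|].
    right; ring.
  - replace (2 * INR L ^ 2 * Rad ^ (2 * L - 2) * (beta + G) * pnorm dims L (psub W V))
      with (2 * INR L * (INR L * C)) by (unfold C; ring).
    apply Rmult_le_compat_r; [apply Rmult_le_pos|]; lra.
Qed.
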